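(* Let $\mathcal{C}$ be a full reflective subcategory of $\mathsf{Top}$, closed under isomorphisms and containing the two-point discrete space, and suppose $\mathcal{C}$ is properly contained in the category $\mathsf{Top}_1$ of T$_1$-spaces. If $\mathcal{C}$ contains every topological space whose topology is the infimum (in the lattice of topologies on its underlying set) of finitely many ultraspace topologies on that set, then the empty space is the only finitely generated object of $\mathcal{C}$.
   Context: Given a set $X$, a point $x\in X$ and a free ultrafilter $\mathcal{U}$ on $X$ (one containing no finite sets), the corresponding ultraspace topology on $X$ makes every point other than $x$ isolated, and the neighbourhoods of $x$ are exactly the sets $U\cup\{x\}$ with $U\in\mathcal{U}$. An object $X$ of $\mathcal{C}$ is finitely generated if for every directed diagram $(Z_i)_{i\in I}$ in $\mathcal{C}$ (indexed by a directed poset, i.e. every finite subset has an upper bound) all of whose connecting morphisms $z_{i,j}$ are monomorphisms, with colimit cocone $c_i:Z_i\to Z$ in $\mathcal{C}$, every morphism $f:X\to Z$ factorizes as $f=c_i\cdot g$ for some $i$ and $g:X\to Z_i$, and if also $f=c_i\cdot g'$ then $z_{i,j}\cdot g=z_{i,j}\cdot g'$ for some connecting morphism $z_{i,j}$. *)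

From Stdlib Require Import List.
Import ListNotations.

Record space := Space {
  carrier :> Type;
  is_open : (carrier -> Prop) -> Prop;
  open_full : is_open (fun _ => True);
  open_inter : forall A B, is_open A -> is_open B -> is_open (fun x => A x /\ B x);
  open_union : forall F : (carrier -> Prop) -> Prop,
      (forall A, F A -> is_open A) -> is_open (fun x => exists A, F A /\ A x)
}.

Record cmap (X Y : space) := CMap {
  fn :> X -> Y;
  fn_cont : forall V, is_open Y V -> is_open X (fun x => V (fn x))
}.
Arguments fn {X Y}.

Definition comp {X Y Z : space} (g : cmap Y Z) (f : cmap X Y) : cmap X Z.
Proof.
  refine (CMap X Z (fun x => g (f x)) _).
  intros V HV. exact (fn_cont _ _ f _ (fn_cont _ _ g V HV)).
Defined.

Definition idmap (X : space) : cmap X X.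
Proof. refine (CMap X X (fun x => x) _). intros V HV; exact HV. Defined.

Definition meq {X Y : space} (f g : cmap X Y) : Prop := forall x, f x = g x.

(** A "subcategory" of Top is given by a predicate on objects; it is full
    (all continuous maps between its objects are morphisms). *)
Definition subcat := space -> Prop.

Definition homeomorphic (X Y : space) : Prop :=
  exists (f : cmap X Y) (g : cmap Y X), meq (comp g f) (idmap X) /\ meq (comp f g) (idmap Y).

Definition iso_closed (C : subcat) : Prop :=
  forall X Y, homeomorphic X Y -> C X -> C Y.

Definition reflective (C : subcat) : Prop :=
  forall X : space, exists (R : space) (eta : cmap X R), C R /\
    forall Y : space, C Y -> forall f : cmap X Y,
      exists g : cmap R Y, meq (comp g eta) f /\
        forall g' : cmap R Y, meq (comp g' eta) f -> meq g' g.

Definition discrete (X : space) : Prop := forall O, is_open X O.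

Definition contains_two_point_discrete (C : subcat) : Prop :=
  exists S : space, C S /\ discrete S /\
    exists a b : S, a <> b /\ forall x : S, x = a \/ x = b.

Definition T1 (X : space) : Prop :=
  forall x y : X, x <> y -> exists O, is_open X O /\ O x /\ ~ O y.

Definition proper_in_Top1 (C : subcat) : Prop :=
  (forall X, C X -> T1 X) /\ exists X, T1 X /\ ~ C X.

Definition finite_set {X : Type} (A : X -> Prop) : Prop :=
  exists l : list X, forall x, A x -> In x l.

Definition ultrafilter {X : Type} (U : (X -> Prop) -> Prop) : Prop :=
  ~ U (fun _ => False) /\
  U (fun _ => True) /\
  (forall A B : X -> Prop, U A -> (forall x, A x -> B x) -> U B) /\
  (forall A B, U A -> U B -> U (fun x => A x /\ B x)) /\
  (forall A, U A \/ U (fun x => ~ A x)).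

Definition free_ultrafilter {X : Type} (U : (X -> Prop) -> Prop) : Prop :=
  ultrafilter U /\ forall A, finite_set A -> ~ U A.

(** Open sets of the ultraspace topology given by the point x and U:
    every point other than x is isolated, and the neighbourhoods of x are
    the sets V ∪ {x} with V ∈ U (and their supersets). *)
Definition ultra_open {X : Type} (x : X) (U : (X -> Prop) -> Prop) (O : X -> Prop) : Prop :=
  O x -> exists V, U V /\ forall y, (V y \/ y = x) -> O y.

(** The topology of S is the infimum (= intersection of the families of open
    sets) of finitely many (at least one) ultraspace topologies on its carrier. *)
Definition inf_of_finitely_many_ultraspaces (S : space) : Prop :=
  exists l : list (S * ((S -> Prop) -> Prop)),
    l <> [] /\ (forall p, In p l -> free_ultrafilter (snd p)) /\
    forall O, is_open S O <-> (forall p, In p l -> ultra_open (fst p) (snd p) O).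

Definition mono_in (C : subcat) {X Y : space} (m : cmap X Y) : Prop :=
  forall W, C W -> forall g h : cmap W X, meq (comp m g) (comp m h) -> meq g h.

Record ddiagram (C : subcat) := DDiagram {
  idx : Type;
  le : idx -> idx -> Prop;
  le_refl : forall i, le i i;
  le_trans : forall i j k, le i j -> le j k -> le i k;
  le_antisym : forall i j, le i j -> le j i -> i = j;
  directed : forall l : list idx, exists k, forall i, In i l -> le i k;
  obj : idx -> space;
  objC : forall i, C (obj i);
  arr : forall i j, le i j -> cmap (obj i) (obj j);
  arr_id : forall i (h : le i i), meq (arr i i h) (idmap (obj i));
  arr_comp : forall i j k (h1 : le i j) (h2 : le j k) (h3 : le i k),
      meq (arr i k h3) (comp (arr j k h2) (arr i j h1));
  arr_mono : forall i j (h : le i j), mono_in C (arr i j h)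
}.
Arguments idx {C}. Arguments le {C}. Arguments obj {C}. Arguments arr {C}.

Definition is_cocone {C : subcat} (D : ddiagram C) (Z : space)
    (c : forall i, cmap (obj D i) Z) : Prop :=
  forall i j (h : le D i j), meq (comp (c j) (arr D i j h)) (c i).

Definition is_colimit_in (C : subcat) (D : ddiagram C) (Z : space)
    (c : forall i, cmap (obj D i) Z) : Prop :=
  C Z /\ is_cocone D Z c /\
  forall W, C W -> forall d : forall i, cmap (obj D i) W, is_cocone D W d ->
    exists u : cmap Z W, (forall i, meq (comp u (c i)) (d i)) /\
      forall u' : cmap Z W, (forall i, meq (comp u' (c i)) (d i)) -> meq u' u.

Definition finitely_generated (C : subcat) (X : space) : Prop :=
  forall (D : ddiagram C) (Z : space) (c : forall i, cmap (obj D i) Z),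
    is_colimit_in C D Z c ->
    forall f : cmap X Z,
      (exists i (g : cmap X (obj D i)), meq f (comp (c i) g)) /\
      (forall i (g g' : cmap X (obj D i)),
          meq f (comp (c i) g) -> meq f (comp (c i) g') ->
          exists j (h : le D i j), meq (comp (arr D i j h) g) (comp (arr D i j h) g')).

From mathcomp Require filter.
From Stdlib Require Import Lia List FinFun Classical ClassicalEpsilon.
From Stdlib Require Import FunctionalExtensionality PropExtensionality ProofIrrelevance.
Import ListNotations.

(* If a nonempty X in C were finitely generated, test it against the directed diagram of
   all finite infima of free ultraspace topologies on an infinite set A, ordered by
   coarsening.  The intersection of these topologies is the cofinite topology, so the
   colimit of the diagram in C is the reflection of the cofinite space Cof A.  Constant
   maps out of X then make the reflection unit of Cof A bijective; as the reflection is
   T1 and the cofinite topology is the coarsest T1 topology, Cof A lies in C.  Once C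
   contains the infinite cofinite spaces it contains every T1 space T: the maps from T
   to Cof (T + nat) with closed fibres separate points and detect the open sets of T,
   which forces the reflection unit of T to be a homeomorphism.  This contradicts
   C <> Top1. *)

Lemma open_ext (X : space) (A B : X -> Prop) :
  is_open X A -> (forall x, A x <-> B x) -> is_open X B.
Proof.
  intros HA HAB. replace B with A; [exact HA |].
  apply functional_extensionality; intros x; apply propositional_extensionality, HAB.
Qed.

Lemma open_empty (X : space) : is_open X (fun _ => False).
Proof.
  apply (open_ext X _ _ (open_union X (fun _ => False) (fun A HA => False_ind _ HA))).
  intros x; split; [intros (A & [] & _) | intros []].
Qed.

Lemma open_const (X : space) (P : Prop) : is_open X (fun _ => P).
Proof.
  destruct (classic P) as [HP | HP].
  - apply (open_ext X _ _ (open_full X)); tauto.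
  - apply (open_ext X _ _ (open_empty X)); tauto.
Qed.

Lemma open_forall_in (X : space) (I : Type) (l : list I) (P : I -> X -> Prop) :
  (forall i, In i l -> is_open X (P i)) -> is_open X (fun x => forall i, In i l -> P i x).
Proof.
  induction l as [| i l IH]; intros HP.
  - apply (open_ext X _ _ (open_full X)); simpl; tauto.
  - apply (open_ext X _ _ (open_inter X _ _ (HP i (in_eq i l))
                                       (IH (fun j Hj => HP j (in_cons i j l Hj))))).
    intros x; split.
    + intros [Hi Hl] j [<- | Hj]; auto.
    + intros H; split; [apply H, in_eq | intros j Hj; apply H, in_cons, Hj].
Qed.

Definition const (X Y : space) (y : Y) : cmap X Y :=
  CMap X Y (fun _ => y) (fun V _ => open_const X (V y)).

Lemma T1_open_compl_subsingleton (X : space) (P : X -> Prop) :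
  T1 X -> (forall x y, P x -> P y -> x = y) -> is_open X (fun x => ~ P x).
Proof.
  intros HT HP. destruct (classic (exists a, P a)) as [[a Pa] | Hno].
  - apply (open_ext X (fun x => exists O, (is_open X O /\ ~ O a) /\ O x)).
    + apply open_union. tauto.
    + intros x; split.
      * intros (O & [_ nOa] & Ox) Px. rewrite (HP x a Px Pa) in Ox. contradiction.
      * intros nPx. assert (Hxa : x <> a) by (intros ->; contradiction).
        destruct (HT x a Hxa) as (O & HO & Ox & nOa). eauto.
  - apply (open_ext X _ _ (open_full X)). intros x; split; eauto.
Qed.

Definition cof_open (A : Type) (O : A -> Prop) : Prop :=
  (exists x, O x) -> finite_set (fun x => ~ O x).

Definition Cof (A : Type) : space.
Proof.
  refine (Space A (cof_open A) _ _ _).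
  - intros _. exists []. intros x Hx. exact (Hx I).
  - intros U V HU HV [x [Ux Vx]].
    destruct (HU (ex_intro _ x Ux)) as [lU HlU], (HV (ex_intro _ x Vx)) as [lV HlV].
    exists (lU ++ lV). intros y Hy. apply in_or_app.
    destruct (classic (U y)); [right; apply HlV | left; apply HlU]; tauto.
  - intros F HF (x & U & FU & Ux).
    destruct (HF U FU (ex_intro _ x Ux)) as [l Hl].
    exists l. intros y Hy. apply Hl. intros Uy. apply Hy. eauto.
Defined.

Lemma cof_continuous (T : space) (Y : Type) (k : T -> Y) :
  (forall y, is_open T (fun t => k t <> y)) ->
  forall O, is_open (Cof Y) O -> is_open T (fun t => O (k t)).
Proof.
  intros Hk O HO. destruct (classic (exists y, O y)) as [Hne | Hempty].
  - destruct (HO Hne) as [l Hl].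
    apply (open_ext T (fun t => forall y, In y l -> O y \/ k t <> y)).
    + apply open_forall_in. intros y _. destruct (classic (O y)) as [Oy | nOy].
      * apply (open_ext T _ _ (open_full T)); tauto.
      * apply (open_ext T _ _ (Hk y)); tauto.
    + intros t; split.
      * intros H. apply NNPP. intros nO. destruct (H (k t) (Hl _ nO)); auto.
      * intros Ot y _. destruct (classic (k t = y)) as [<- |]; auto.
  - apply (open_ext T _ _ (open_empty T)). intros t; split; [tauto | eauto].
Qed.

Definition cof_map (T : space) (Y : Type) (k : T -> Y)
  (Hk : forall y, is_open T (fun t => k t <> y)) : cmap T (Cof Y) :=
  CMap T (Cof Y) k (cof_continuous T Y k Hk).

Lemma T1_injective_fibres_closed (T : space) (Y : Type) (k : T -> Y) :
  T1 T -> Injective k -> forall y, is_open T (fun t => k t <> y).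
Proof.
  intros HT Hk y. apply T1_open_compl_subsingleton; [exact HT |].
  intros t t' Ht Ht'. apply Hk. congruence.
Qed.

Definition infinite (A : Type) : Prop := ~ finite_set (fun _ : A => True).

Lemma infinite_of_injection (A : Type) (f : nat -> A) : Injective f -> infinite A.
Proof.
  intros Hf [l Hl].
  assert (Hlen : length (map f (seq 0 (Datatypes.S (length l)))) <= length l).
  { apply NoDup_incl_length.
    - apply Injective_map_NoDup; [exact Hf | apply seq_NoDup].
    - intros y _. apply Hl. exact I. }
  rewrite length_map, length_seq in Hlen. lia.
Qed.

Lemma infinite_sum_nat (A : Type) : infinite (A + nat).
Proof. apply (infinite_of_injection _ inr). intros m n E. injection E. auto. Qed.

Lemma free_ultrafilter_containing (A : Type) (P : A -> Prop) :
  ~ finite_set P -> exists U, free_ultrafilter U /\ U P.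
Proof.
  intros HP.
  pose (F := fun B : A -> Prop => exists l, forall x, P x -> ~ In x l -> B x).
  assert (FF : filter.ProperFilter F).
  { split.
    - intros [l Hl]. apply HP. exists l. intros x Px. apply NNPP. exact (Hl x Px).
    - split.
      + exists []. intros; exact I.
      + intros B1 B2 [l1 H1] [l2 H2]. exists (l1 ++ l2). intros x Px Hx.
        split; [apply H1 | apply H2]; auto; intros Hin; apply Hx, in_or_app; auto.
      + intros B1 B2 H12 [l Hl]. exists l. intros x Px Hx. apply H12, Hl; auto. }
  destruct (filter.ultraFilterLemma FF) as [U [UU FU]].
  assert (HnoP : forall l, U (fun x => P x /\ ~ In x l)) by (intros l; apply FU; exists l; auto).
  exists U. repeat split.
  - exact (filter.filter_not_empty U).
  - exact (@filter.filterT _ U _).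
  - intros B1 B2 HB H12. exact (@filter.filterS _ U _ _ _ H12 HB).
  - intros B1 B2 H1 H2. exact (@filter.filterI _ U _ _ _ H1 H2).
  - intros B. exact (filter.in_ultra_setVsetC B UU).
  - intros B [l Hl] UB. apply (filter.filter_not_empty U).
    refine (@filter.filterS _ U _ _ _ _ (@filter.filterI _ U _ _ _ UB (HnoP l))).
    intros x [Bx [_ Hx]]. exact (Hx (Hl x Bx)).
  - apply FU. exists []. auto.
Qed.

Section Ultraspaces.
Variable A : Type.
Implicit Types (x : A) (U : (A -> Prop) -> Prop) (O : A -> Prop).

Lemma ultra_open_full x U : ultrafilter U -> ultra_open x U (fun _ => True).
Proof. intros (_ & UT & _) _. exists (fun _ => True). auto. Qed.

Lemma ultra_open_inter x U O1 O2 : ultrafilter U ->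
  ultra_open x U O1 -> ultra_open x U O2 -> ultra_open x U (fun y => O1 y /\ O2 y).
Proof.
  intros (_ & _ & _ & UI & _) H1 H2 [O1x O2x].
  destruct (H1 O1x) as (V1 & UV1 & HV1), (H2 O2x) as (V2 & UV2 & HV2).
  exists (fun y => V1 y /\ V2 y). split; [auto |].
  intros y [[] | ->]; auto.
Qed.

Lemma ultra_open_union x U (F : (A -> Prop) -> Prop) :
  (forall O, F O -> ultra_open x U O) -> ultra_open x U (fun y => exists O, F O /\ O y).
Proof.
  intros HF (O & FO & Ox). destruct (HF O FO Ox) as (V & UV & HV).
  exists V. split; [exact UV |]. intros y Hy. eauto.
Qed.

Lemma ultra_open_cofinite x U O : free_ultrafilter U -> cof_open A O -> ultra_open x U O.
Proof.
  intros [(_ & _ & _ & _ & Ucompl) Ufree] HO Ox. exists O. split.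
  - destruct (Ucompl O) as [UO | UnO]; [exact UO |].
    destruct (Ufree _ (HO (ex_intro _ x Ox)) UnO).
  - intros y [Oy | ->]; auto.
Qed.

Lemma cof_open_of_ultra_open O :
  (forall x U, free_ultrafilter U -> ultra_open x U O) -> cof_open A O.
Proof.
  intros HO [x Ox]. apply NNPP. intros Hinf.
  destruct (free_ultrafilter_containing A _ Hinf) as (U & HU & UnO).
  destruct (HO x U HU Ox) as (V & UV & HV).
  destruct HU as [(Unot & _ & Umono & UI & _) _].
  apply Unot, (Umono _ _ (UI _ _ UV UnO)). intros y [Vy nOy]. exact (nOy (HV y (or_introl Vy))).
Qed.

Definition ultra_inf_open (l : list (A * ((A -> Prop) -> Prop))) O : Prop :=
  forall p, In p l -> ultra_open (fst p) (snd p) O.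

Lemma ultra_inf_open_app l1 l2 O :
  ultra_inf_open (l1 ++ l2) O <-> ultra_inf_open l1 O /\ ultra_inf_open l2 O.
Proof.
  unfold ultra_inf_open. split.
  - intros H; split; intros p Hp; apply H, in_or_app; auto.
  - intros [H1 H2] p Hp. apply in_app_or in Hp as [Hp | Hp]; auto.
Qed.

End Ultraspaces.

Lemma injective_surjective_inverse (A B : Type) (f : A -> B) :
  Injective f -> Surjective f -> exists g, (forall a, g (f a) = a) /\ (forall b, f (g b) = b).
Proof.
  intros Hinj Hsurj.
  pose (g := fun b => proj1_sig (constructive_indefinite_description _ (Hsurj b))).
  assert (Hfg : forall b, f (g b) = b).
  { intros b. exact (proj2_sig (constructive_indefinite_description _ (Hsurj b))). }
  exists g. split; [intros a; apply Hinj, Hfg | exact Hfg].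
Qed.

Definition is_reflection (C : subcat) (X R : space) (eta : cmap X R) : Prop :=
  C R /\ forall Y : space, C Y -> forall f : cmap X Y,
    exists g : cmap R Y, meq (comp g eta) f /\
      forall g' : cmap R Y, meq (comp g' eta) f -> meq g' g.

Section Reflection.
Variables (C : subcat) (X R : space) (eta : cmap X R).
Hypothesis Heta : is_reflection C X R eta.

Lemma reflection_factor (Y : space) (f : cmap X Y) :
  C Y -> exists g : cmap R Y, forall x, g (eta x) = f x.
Proof. intros CY. destruct (proj2 Heta Y CY f) as (g & Hg & _). exists g. exact Hg. Qed.

Lemma reflection_epi (Y : space) (g g' : cmap R Y) :
  C Y -> (forall x, g (eta x) = g' (eta x)) -> meq g g'.
Proof.
  intros CY Hgg'. destruct (proj2 Heta Y CY (comp g eta)) as (h & _ & Hh).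
  intros r. rewrite (Hh g (fun x => eq_refl) r), (Hh g' (fun x => eq_sym (Hgg' x)) r).
  reflexivity.
Qed.

Hypothesis HCof : forall Y, infinite Y -> C (Cof Y).
Hypothesis HX : T1 X.
Hypothesis HR : T1 R.

Lemma reflection_unit_injective : Injective eta.
Proof.
  assert (Hinl : Injective (@inl X nat)) by (intros x y E; injection E; auto).
  pose (i := cof_map X (X + nat) inl (T1_injective_fibres_closed X _ inl HX Hinl)).
  destruct (reflection_factor _ i (HCof _ (infinite_sum_nat X))) as [g Hg].
  intros x y E. pose proof (Hg x) as Hx. rewrite E, Hg in Hx. injection Hx. auto.
Qed.

Lemma reflection_unit_surjective : Surjective eta.
Proof.
  pose (im r := exists x, eta x = r).
  (* [k0] and [k1] are injective, hence continuous, and agree exactly on the image of [eta] *)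
  pose (k0 := fun r : R => @inl (R + R) nat (inl r)).
  pose (k1 := fun r : R =>
          @inl (R + R) nat (if excluded_middle_informative (im r) then inl r else inr r)).
  assert (Hk0 : Injective k0) by (intros r r' E; injection E; auto).
  assert (Hk1 : Injective k1).
  { intros r r' E. unfold k1 in E.
    destruct (excluded_middle_informative (im r)), (excluded_middle_informative (im r'));
      injection E; auto; discriminate. }
  assert (Hk : meq (cof_map R _ k0 (T1_injective_fibres_closed R _ k0 HR Hk0))
                   (cof_map R _ k1 (T1_injective_fibres_closed R _ k1 HR Hk1))).
  { apply reflection_epi; [apply HCof, infinite_sum_nat |].
    intros x. simpl. unfold k0, k1.
    destruct (excluded_middle_informative (im (eta x))) as [_ | Hno]; [reflexivity |].
    exfalso. apply Hno. exists x. reflexivity. }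
  intros r. pose proof (Hk r) as E. simpl in E. unfold k0, k1 in E.
  destruct (excluded_middle_informative (im r)) as [Hr | _]; [exact Hr | discriminate].
Qed.

Lemma reflection_unit_inverse_continuous (e : R -> X) :
  (forall r, eta (e r) = r) -> forall G, is_open X G -> is_open R (fun r => G (e r)).
Proof.
  intros He G HG.
  (* [chi] sends [G] injectively to [X] and its closed complement to a single point *)
  pose (chi := fun x : X => if excluded_middle_informative (G x) then @inl X nat x else inr 0).
  assert (Hchi0 : forall x, chi x <> inr 0 <-> G x).
  { intros x. unfold chi. destruct (excluded_middle_informative (G x)); split;
      auto; try discriminate; tauto. }
  assert (Hfib : forall y, is_open X (fun x => chi x <> y)).
  { intros y. destruct (classic (y = inr 0)) as [-> | Hy].
    - apply (open_ext X _ _ HG). intros x. symmetry. apply Hchi0.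
    - apply T1_open_compl_subsingleton; [exact HX |]. intros x x' Hx Hx'.
      unfold chi in Hx, Hx'.
      destruct (excluded_middle_informative (G x)), (excluded_middle_informative (G x'));
        subst; try contradiction; congruence. }
  destruct (reflection_factor _ (cof_map X _ chi Hfib) (HCof _ (infinite_sum_nat X))) as [h Hh].
  apply (open_ext R (fun r => h r <> inr 0)).
  - apply (fn_cont _ _ h (fun y => y <> inr 0)). intros _.
    exists [inr 0]. intros y Hy. left. symmetry. apply NNPP, Hy.
  - intros r. rewrite <- (He r) at 1. rewrite Hh. apply Hchi0.
Qed.

End Reflection.

Lemma T1_in_reflective_of_Cof (C : subcat) :
  reflective C -> iso_closed C -> (forall X, C X -> T1 X) ->
  (forall Y, infinite Y -> C (Cof Y)) -> forall X, T1 X -> C X.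
Proof.
  intros Hrefl Hiso HC1 HCof X HX.
  destruct (Hrefl X) as (R & eta & Heta).
  assert (HR : T1 R) by exact (HC1 R (proj1 Heta)).
  destruct (injective_surjective_inverse _ _ eta
              (reflection_unit_injective C X R eta Heta HCof HX)
              (reflection_unit_surjective C X R eta Heta HCof HR)) as (e & He & He').
  apply (Hiso R X); [| exact (proj1 Heta)].
  exists (CMap R X e (reflection_unit_inverse_continuous C X R eta Heta HCof HX e He')), eta.
  split; intros x; simpl; auto.
Qed.

Section UltraspaceDiagram.
Variable A : Type.

Definition ultra_inf_topology (tau : (A -> Prop) -> Prop) : Prop :=
  exists l, l <> [] /\ (forall p, In p l -> free_ultrafilter (snd p)) /\
    tau = ultra_inf_open A l.

Definition uidx := {tau | ultra_inf_topology tau}.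

Definition uspace (a : uidx) : space.
Proof.
  refine (Space A (proj1_sig a) _ _ _);
    destruct a as [tau Htau]; simpl; destruct Htau as (l & _ & Hfree & ->);
    unfold ultra_inf_open.
  - intros p Hp. exact (ultra_open_full A _ _ (proj1 (Hfree p Hp))).
  - intros O1 O2 H1 H2 p Hp.
    exact (ultra_open_inter A _ _ _ _ (proj1 (Hfree p Hp)) (H1 p Hp) (H2 p Hp)).
  - intros F HF p Hp. apply ultra_open_union. intros O FO. exact (HF O FO p Hp).
Defined.

Lemma uspace_inf_of_ultraspaces (a : uidx) : inf_of_finitely_many_ultraspaces (uspace a).
Proof.
  destruct a as [tau (l & Hne & Hfree & ->)].
  exists l. split; [exact Hne | split; [exact Hfree | reflexivity]].
Qed.

(* [ule a b]: [b] is coarser than [a], so the identity [uspace a -> uspace b] is continuous. *)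
Definition ule (a b : uidx) : Prop := forall O, proj1_sig b O -> proj1_sig a O.

Lemma ule_antisym (a b : uidx) : ule a b -> ule b a -> a = b.
Proof.
  intros Hab Hba. apply eq_sig_hprop; [intros; apply proof_irrelevance |].
  apply functional_extensionality; intros O; apply propositional_extensionality; split; auto.
Qed.

Lemma ule_join (a b : uidx) : exists c, ule a c /\ ule b c.
Proof.
  destruct a as [ta (la & Hnea & Hfa & ->)], b as [tb (lb & Hneb & Hfb & ->)].
  assert (Hc : ultra_inf_topology (ultra_inf_open A (la ++ lb))).
  { exists (la ++ lb). split; [| split; [| reflexivity]].
    - destruct la; [contradiction | discriminate].
    - intros p Hp. apply in_app_or in Hp as [Hp | Hp]; auto. }
  exists (exist _ _ Hc). split; intros O HO; apply ultra_inf_open_app in HO; apply HO.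
Qed.

Lemma uidx_inhabited : infinite A -> inhabited uidx.
Proof.
  intros Hinf. destruct (free_ultrafilter_containing A _ Hinf) as (U & HU & _).
  assert (Hx : exists x : A, True).
  { apply NNPP. intros Hno. apply Hinf. exists []. intros x _. apply Hno. eauto. }
  destruct Hx as [x _].
  constructor. exists (ultra_inf_open A [(x, U)]), [(x, U)].
  split; [discriminate | split; [intros p [<- | []]; exact HU | reflexivity]].
Qed.

Lemma ule_directed : infinite A -> forall l : list uidx, exists k, forall i, In i l -> ule i k.
Proof.
  intros Hinf. induction l as [| a l [k Hk]].
  - destruct (uidx_inhabited Hinf) as [k]. exists k. intros i [].
  - destruct (ule_join a k) as (c & Hac & Hkc).
    exists c. intros i [<- | Hi]; [exact Hac |]. intros O HO. exact (Hk i Hi O (Hkc O HO)).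
Qed.

Definition uarr (a b : uidx) (h : ule a b) : cmap (uspace a) (uspace b) :=
  CMap (uspace a) (uspace b) (fun x => x) h.

Lemma cof_open_uspace (a : uidx) (O : A -> Prop) : cof_open A O -> is_open (uspace a) O.
Proof.
  destruct a as [tau Htau]. simpl. destruct Htau as (l & _ & Hfree & ->). intros HO p Hp.
  exact (ultra_open_cofinite A _ _ _ (Hfree p Hp) HO).
Qed.

Definition uspace_to_cof (a : uidx) : cmap (uspace a) (Cof A) :=
  CMap (uspace a) (Cof A) (fun x => x) (cof_open_uspace a).

Lemma cof_open_of_open_in_all_uspaces (O : A -> Prop) :
  (forall a, is_open (uspace a) O) -> cof_open A O.
Proof.
  intros HO. apply cof_open_of_ultra_open. intros x U HU.
  assert (Ha : ultra_inf_topology (ultra_inf_open A [(x, U)])).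
  { exists [(x, U)]. split; [discriminate | split; [intros p [<- | []]; exact HU | reflexivity]]. }
  exact (HO (exist _ _ Ha) (x, U) (in_eq _ _)).
Qed.

Variable C : subcat.
Hypothesis Hinf : infinite A.
Hypothesis HC : forall a, C (uspace a).

Definition udiagram : ddiagram C.
Proof.
  refine (DDiagram C uidx ule _ _ ule_antisym (ule_directed Hinf) uspace HC uarr _ _ _).
  - intros a O HO; exact HO.
  - intros a b c Hab Hbc O HO. exact (Hab O (Hbc O HO)).
  - intros a h x; reflexivity.
  - intros a b c h1 h2 h3 x; reflexivity.
  - intros a b h W _ g g' E x. exact (E x).
Defined.

Lemma udiagram_cocone_const W (d : forall a, cmap (uspace a) W) :
  is_cocone udiagram W d -> forall a b x, d a x = d b x.
Proof.
  intros Hd a b x. destruct (ule_join a b) as (c & Hac & Hbc).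
  exact (eq_trans (eq_sym (Hd a c Hac x)) (Hd b c Hbc x)).
Qed.

End UltraspaceDiagram.

Section FinitelyGenerated.
Variables (C : subcat) (X : space) (x0 : X).
Hypothesis HX : finitely_generated C X.
Variables (D : ddiagram C) (Z : space) (c : forall i, cmap (obj D i) Z).
Hypothesis Hcol : is_colimit_in C D Z c.

Lemma fg_colimit_jointly_surjective (z : Z) : exists i y, c i y = z.
Proof.
  destruct (proj1 (HX D Z c Hcol (const X Z z))) as (i & g & Hg).
  exists i, (g x0). symmetry. exact (Hg x0).
Qed.

Lemma fg_colimit_eventually_injective i (y y' : obj D i) :
  c i y = c i y' -> exists j (h : le D i j), arr D i j h y = arr D i j h y'.
Proof.
  intros E.
  destruct (proj2 (HX D Z c Hcol (const X Z (c i y))) i (const X _ y) (const X _ y'))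
    as (j & h & Hh); [intros x; reflexivity | intros x; exact E |].
  exists j, h. exact (Hh x0).
Qed.

End FinitelyGenerated.

Lemma udiagram_colimit (C : subcat) (A : Type) (Hinf : infinite A)
  (HC : forall a, C (uspace A a)) (R : space) (eta : cmap (Cof A) R) :
  is_reflection C (Cof A) R eta ->
  is_colimit_in C (udiagram A C Hinf HC) R (fun a => comp eta (uspace_to_cof A a)).
Proof.
  intros Heta. split; [exact (proj1 Heta) |]. split; [intros a b h x; reflexivity |].
  intros W CW d Hd.
  destruct (uidx_inhabited A Hinf) as [a0].
  pose proof (udiagram_cocone_const A C Hinf HC W d Hd) as Hconst.
  assert (Hcont : forall V, is_open W V -> is_open (Cof A) (fun x => V (d a0 x))).
  { intros V HV. apply cof_open_of_open_in_all_uspaces. intros a.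
    apply (open_ext _ _ _ (fn_cont _ _ (d a) V HV)).
    intros x. simpl. rewrite (Hconst a a0 x). tauto. }
  destruct (proj2 Heta W CW (CMap (Cof A) W (fun x => d a0 x) Hcont)) as (g & Hg & Hgu).
  exists g. split.
  - intros a x. simpl. rewrite (Hconst a a0 x). exact (Hg x).
  - intros u' Hu'. apply Hgu. exact (Hu' a0).
Qed.

Lemma Cof_in_reflective_of_fg (C : subcat) :
  reflective C -> iso_closed C -> (forall X, C X -> T1 X) ->
  (forall S, inf_of_finitely_many_ultraspaces S -> C S) ->
  forall X : space, finitely_generated C X -> X -> forall A, infinite A -> C (Cof A).
Proof.
  intros Hrefl Hiso HC1 Hult X HX x0 A Hinf.
  pose proof (fun a => Hult _ (uspace_inf_of_ultraspaces A a)) as HC.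
  destruct (Hrefl (Cof A)) as (R & eta & Heta).
  pose proof (udiagram_colimit C A Hinf HC R eta Heta) as Hcol.
  assert (Hsurj : Surjective eta).
  { intros r. destruct (fg_colimit_jointly_surjective C X x0 HX _ _ _ Hcol r) as (a & y & Hy).
    exists y. exact Hy. }
  assert (Hinj : Injective eta).
  { intros y y' E. destruct (uidx_inhabited A Hinf) as [a].
    destruct (fg_colimit_eventually_injective C X x0 HX _ _ _ Hcol a y y' E) as (b & h & Hh).
    exact Hh. }
  destruct (injective_surjective_inverse _ _ eta Hinj Hsurj) as (e & He & He').
  assert (He_inj : Injective e).
  { intros r r' E. rewrite <- (He' r), <- (He' r'), E. reflexivity. }
  apply (Hiso R (Cof A)); [| exact (proj1 Heta)].
  exists (cof_map R A e (T1_injective_fibres_closed R A e (HC1 R (proj1 Heta)) He_inj)), eta.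
  split; intros x; simpl; auto.
Qed.

Lemma empty_finitely_generated (C : subcat) (X : space) :
  (X -> False) -> finitely_generated C X.
Proof.
  intros Hempty D Z c _ f. split.
  - destruct (directed C D []) as [i _].
    exists i, (CMap X (obj D i) (fun x => False_rect _ (Hempty x))
                 (fun V _ => open_ext X _ _ (open_empty X) (fun x => False_ind _ (Hempty x)))).
    intros x. destruct (Hempty x).
  - intros i g g' _ _. exists i, (le_refl C D i). intros x. destruct (Hempty x).
Qed.

Theorem theorem7p8 (C : subcat) :
  reflective C -> iso_closed C -> contains_two_point_discrete C ->
  proper_in_Top1 C ->
  (forall S : space, inf_of_finitely_many_ultraspaces S -> C S) ->
  forall X : space, C X -> (finitely_generated C X <-> (X -> False)).
Proof.
  intros Hrefl Hiso _ [HC1 (T & HT & nCT)] Hult X _. split.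
  - intros HX x0. apply nCT.
    apply (T1_in_reflective_of_Cof C Hrefl Hiso HC1); [| exact HT].
    exact (Cof_in_reflective_of_fg C Hrefl Hiso HC1 Hult X HX x0).
  - apply empty_finitely_generated.
Qed.
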